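(* Let $\gamma_{ab}(q)$ be a metric on an $n$-dimensional manifold and $E_0$ a fixed constant, and consider the geodesic equations $\ddot q^a+\Gamma^a_{bc}\dot q^b\dot q^c=0$ subject to the constraint $\gamma_{ab}\dot q^a\dot q^b=2E_0$. Then each of the following is a first integral of this constrained system: Integral 1. For $\ell\ge0$, $$I_{(\ell)1}=\Big(-\sum_{k=1}^{\ell}\frac{t^{2k}}{2k}L_{(2k-1)(a;b)}+C_{(0)ab}\Big)\dot q^a\dot q^b+\sum_{k=1}^{\ell}t^{2k-1}L_{(2k-1)a}\dot q^a+G(q),$$ where $C_{(0)ab}$ is a second order CKT with associated vector $X_{(0)a}$, each $L_{(2k-1)(a;b)}$ ($k=1,\dots,\ell$) is a second order CKT with associated vector $Y_{(2k-1)a}$, and $$E_0Y_{(2\ell-1)a}=0,\qquad E_0Y_{(2k-1)a}=k(2k+1)L_{(2k+1)a}\ (k=1,\dots,\ell-1),\qquad G_{,a}=-2E_0X_{(0)a}-L_{(1)a},$$ where $L_{(1)a}$ is present only if $\ell>0$. Integral 2. For $\ell\ge0$, $$I_{(\ell)2}=\sum_{k=0}^{\ell}\Big(-\frac{t^{2k+1}}{2k+1}L_{(2k)(a;b)}\dot q^a\dot q^b+t^{2k}L_{(2k)a}\dot q^a\Big),$$ where each $L_{(2k)(a;b)}$ ($k=0,\dots,\ell$) is a second order CKT with associated vector $Y_{(2k)a}$ and $$E_0Y_{(2\ell)a}=0,\qquad E_0Y_{(2k)a}=(k+1)(2k+1)L_{(2k+2)a}\ (k=0,\dots,\ell-1).$$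 Integral 3. For a constant $\lambda\ne0$, $$I_{(e)}=e^{\lambda t}\big(-L_{(a;b)}\dot q^a\dot q^b+\lambda L_a\dot q^a\big),$$ where $L_{(a;b)}$ is a second order CKT with associated vector $Y_a$ and $L_a=\frac{2E_0}{\lambda^2}Y_a$.
   Context: $\Gamma^a_{bc}$ are the Levi-Civita connection coefficients of $\gamma_{ab}$; comma = partial derivative, semicolon = covariant derivative, dot = $d/dt$; round brackets denote symmetrization with weight $1/N!$. A first integral of the constrained system is a function $I(t,q,\dot q)$ with $dI/dt=0$ along every geodesic solution satisfying $\gamma_{ab}\dot q^a\dot q^b=2E_0$. A symmetric tensor $U_{ab}$ is a second order conformal Killing tensor (CKT) with associated vector $u_a$ if $U_{(ab;c)}=u_{(a}\gamma_{bc)}$; if $u_a=0$ it is a Killing tensor (KT). *)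

(* Local-coordinate (chart) formalization of
   tensor calculus on an n-dimensional (pseudo-)Riemannian manifold. *)
From HB Require Import structures.
From mathcomp Require Import all_boot all_order all_algebra.
From mathcomp Require Import all_classical all_reals all_analysis.
Set Implicit Arguments. Unset Strict Implicit. Unset Printing Implicit Defensive.
Import Order.TTheory GRing.Theory Num.Theory.
Import numFieldNormedType.Exports.
Local Open Scope classical_set_scope.
Local Open Scope ring_scope.

Section Tensors.
Variables (R : realType) (n : nat).
Notation pt := 'rV[R]_n.

Definition sfield := pt -> R.
Definition covfield := 'I_n -> pt -> R.
Definition tens2 := 'I_n -> 'I_n -> pt -> R.

Definition evec (i : 'I_n) : pt := delta_mx 0 i.
Definition pd (i : 'I_n) (f : sfield) : sfield := fun x => derive f x (evec i).

Definition iter_pd (s : seq 'I_n) (f : sfield) : sfield := foldr pd f s.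
Definition smooth_on (D : set pt) (f : sfield) : Prop :=
  forall (s : seq 'I_n) (x : pt), D x -> differentiable (iter_pd s f) x.

Definition gmx (g : tens2) (x : pt) : 'M[R]_n := \matrix_(a, b) g a b x.
Definition is_metric (D : set pt) (g : tens2) : Prop :=
  (forall a b x, D x -> g a b x = g b a x) /\
  (forall x, D x -> gmx g x \in unitmx) /\
  (forall a b, smooth_on D (g a b)).

Definition ginv (g : tens2) (a b : 'I_n) (x : pt) : R := invmx (gmx g x) a b.
Definition Gam (g : tens2) (a b c : 'I_n) (x : pt) : R :=
  2^-1 * \sum_(d < n) ginv g a d x *
     (pd c (g d b) x + pd b (g d c) x - pd d (g b c) x).

Definition cov1 (g : tens2) (L : covfield) (a b : 'I_n) (x : pt) : R :=
  pd b (L a) x - \sum_(d < n) Gam g d a b x * L d x.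
Definition cov2 (g : tens2) (U : tens2) (a b c : 'I_n) (x : pt) : R :=
  pd c (U a b) x - \sum_(d < n) (Gam g d a c x * U d b x + Gam g d b c x * U a d x).

Definition sym2 (T : tens2) : tens2 := fun a b x => 2^-1 * (T a b x + T b a x).
Definition sym3 (T : 'I_n -> 'I_n -> 'I_n -> pt -> R) a b c x : R :=
  6^-1 * (T a b c x + T a c b x + T b a c x + T b c a x + T c a b x + T c b a x).

Definition symcov1 (g : tens2) (L : covfield) : tens2 := sym2 (cov1 g L).

Definition is_CKT (D : set pt) (g : tens2) (U : tens2) (u : covfield) : Prop :=
  (forall a b x, D x -> U a b x = U b a x) /\
  (forall a b c x, D x ->
     sym3 (cov2 g U) a b c x = sym3 (fun a b c y => u a y * g b c y) a b c x).

Definition quad (T : tens2) (x v : pt) : R :=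
  \sum_(a < n) \sum_(b < n) T a b x * v 0 a * v 0 b.
Definition lin (L : covfield) (x v : pt) : R := \sum_(a < n) L a x * v 0 a.

Definition constrained_geodesic (D : set pt) (g : tens2) (E0 : R)
    (T : set R) (q : R -> pt) : Prop :=
  forall t, T t ->
    [/\ D (q t), derivable q t 1, derivable (derive1 q) t 1,
        (forall a, derive1 (derive1 q) t 0 a +
           \sum_(b < n) \sum_(c < n) Gam g a b c (q t) * derive1 q t 0 b * derive1 q t 0 c = 0)
      & quad g (q t) (derive1 q t) = 2 * E0].

Definition first_integral (D : set pt) (g : tens2) (E0 : R)
    (I : R -> pt -> pt -> R) : Prop :=
  forall (T : set R) (q : R -> pt), open T -> constrained_geodesic D g E0 T q ->
    forall t, T t -> is_derive t 1 (fun s => I s (q s) (derive1 q s)) 0.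

(* The three families of candidate first integrals.  L m stands for L_{(m)}. *)
Definition I1 (g : tens2) (ell : nat) (C0 : tens2) (L : nat -> covfield)
    (G : sfield) (t : R) (x v : pt) : R :=
  quad (fun a b y =>
          - (\sum_(1 <= k < ell.+1)
               t ^+ (2 * k) / (2 * k)%:R * symcov1 g (L (2 * k - 1)%N) a b y)
          + C0 a b y) x v
  + \sum_(1 <= k < ell.+1) t ^+ (2 * k - 1) * lin (L (2 * k - 1)%N) x v
  + G x.

Definition I2 (g : tens2) (ell : nat) (L : nat -> covfield)
    (t : R) (x v : pt) : R :=
  \sum_(0 <= k < ell.+1)
     (- (t ^+ (2 * k + 1) / (2 * k + 1)%:R) * quad (symcov1 g (L (2 * k)%N)) x v
      + t ^+ (2 * k) * lin (L (2 * k)%N) x v).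

Definition Iexp (g : tens2) (lam : R) (L : covfield) (t : R) (x v : pt) : R :=
  expR (lam * t) * (- quad (symcov1 g L) x v + lam * lin L x v).

End Tensors.

From HB Require Import structures.
From mathcomp Require Import all_boot all_order all_algebra.
From mathcomp Require Import all_classical all_reals all_analysis.
Set Implicit Arguments. Unset Strict Implicit. Unset Printing Implicit Defensive.
Import Order.TTheory GRing.Theory Num.Theory.
Import numFieldNormedType.Exports.
Local Open Scope classical_set_scope.
Local Open Scope ring_scope.
From mathcomp Require Import perm ring lra.

(* Along a geodesic with velocity [v], the time derivative of [L_a v^a] is
   [L_(a;b) v^a v^b]: the Christoffel terms of the covariant derivative are
   exactly those produced by the geodesic acceleration.  Likewise the time
   derivative of [K_ab v^a v^b] is [K_(ab;c) v^a v^b v^c], which for a CKT with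
   vector [y] equals [(y_a v^a) (gamma_bc v^b v^c) = 2 E0 y_a v^a] on the energy
   shell.  Differentiating a candidate integral thus produces, for each power
   of [t] (or after the factor [exp (lam t)]), a pair of terms linear in [v];
   the recursions [E0 Y_(k) ~ L_(k+1)] make consecutive pairs cancel, the sum
   telescopes, and the condition on [G] (resp. on [L_a]) absorbs the rest. *)

Section RealDerivatives.
Variable R : realType.
Implicit Types (f g : R -> R) (t : R).

Lemma is_derive_add f g t df dg :
  is_derive t 1 f df -> is_derive t 1 g dg ->
  is_derive t 1 (fun s => f s + g s) (df + dg).
Proof. exact: is_deriveD. Qed.

Lemma is_derive_opp f t df :
  is_derive t 1 f df -> is_derive t 1 (fun s => - f s) (- df).
Proof. exact: is_deriveN. Qed.

Lemma is_derive_mull (c : R) f t df :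
  is_derive t 1 f df -> is_derive t 1 (fun s => c * f s) (c * df).
Proof. exact: is_deriveZ. Qed.

Lemma is_derive_mulr (c : R) f t df :
  is_derive t 1 f df -> is_derive t 1 (fun s => f s * c) (df * c).
Proof.
move=> Hf; rewrite mulrC (_ : (fun s => f s * c) = fun s => c * f s).
  exact: is_derive_mull.
by apply/funext => s; rewrite mulrC.
Qed.

Lemma is_derive_mul f g t df dg :
  is_derive t 1 f df -> is_derive t 1 g dg ->
  is_derive t 1 (fun s => f s * g s) (df * g t + f t * dg).
Proof.
move=> Hf Hg; apply: is_derive_eq (is_deriveM Hf Hg) _.
by rewrite /GRing.scale /= addrC mulrC.
Qed.

Lemma is_derive_big (I : eqType) (r : seq I) (P : pred I) (F : I -> R -> R)
    (dF : I -> R) t :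
  (forall i, i \in r -> P i -> is_derive t 1 (F i) (dF i)) ->
  is_derive t 1 (fun s => \sum_(i <- r | P i) F i s) (\sum_(i <- r | P i) dF i).
Proof.
elim: r => [|a r IHr] HF.
  rewrite big_nil (_ : (fun _ => _) = cst 0); first exact: is_derive_cst.
  by apply/funext => s; rewrite big_nil.
have {}IHr := IHr (fun i ir => HF i (predU1r i a ir)).
under eq_fun => s do rewrite big_cons.
rewrite big_cons; case: ifP => Pa //.
exact: is_derive_add (HF a (mem_head a r) Pa) IHr.
Qed.

Lemma is_derive_exprn k t : is_derive t 1 (fun s => s ^+ k) (k%:R * t ^+ k.-1).
Proof.
have -> : (fun s : R => s ^+ k) = (@id R) ^+ k by apply/funext => s; rewrite exprfctE.
by apply: is_derive_eq (is_deriveX k (is_derive_id t 1)) _; exact: mulr1.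
Qed.

Lemma is_derive_expR_scale (lam t : R) :
  is_derive t 1 (fun s => expR (lam * s)) (lam * expR (lam * t)).
Proof.
have Hlin : is_derive t 1 (fun s => lam * s) lam.
  by apply: is_derive_eq (is_deriveZ lam (is_derive_id t 1)) _; rewrite /GRing.scale /= mulr1.
by rewrite mulrC; exact: is_derive1_comp.
Qed.

Lemma is_derive_sum_nat (m N : nat) (F : nat -> R -> R) (dF : nat -> R) t :
  (forall k, (m <= k < N)%N -> is_derive t 1 (F k) (dF k)) ->
  is_derive t 1 (fun s => \sum_(m <= k < N) F k s) (\sum_(m <= k < N) dF k).
Proof. by move=> HF; apply: is_derive_big => k; rewrite mem_index_iota => /HF. Qed.

End RealDerivatives.

Section GermDifferentiability.
Variables (R : realType) (n : nat).
Notation pt := 'rV[R]_n.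
Implicit Types (f h : pt -> R) (x : pt).

(* [differentiable] is not known to be invariant under equality near [x];
   the inverse metric, for instance, is only near [x] given by a formula. *)
Definition germ_differentiable f x : Prop :=
  exists2 f', differentiable f' x & \forall y \near x, f y = f' y.

Lemma differentiable_germ f x : differentiable f x -> germ_differentiable f x.
Proof. by move=> df; exists f => //; near=> y. Unshelve. all: by end_near. Qed.

Lemma germ_differentiable_near_eq f h x :
  (\forall y \near x, f y = h y) -> germ_differentiable h x ->
  germ_differentiable f x.
Proof. by move=> fh [h' dh' hh']; exists h' => //; apply: filterS2 fh hh' => y -> ->. Qed.

Lemma germ_differentiable_cst (c : R) x : germ_differentiable (fun _ => c) x.
Proof. exact/differentiable_germ/differentiable_cst. Qed.

Lemma germ_differentiableN f x :
  germ_differentiable f x -> germ_differentiable (fun y => - f y) x.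
Proof.
move=> [f' df' ff']; exists (fun y => - f' y); first exact: differentiableN.
by apply: filterS ff' => y ->.
Qed.

Lemma germ_differentiableD f h x :
  germ_differentiable f x -> germ_differentiable h x ->
  germ_differentiable (fun y => f y + h y) x.
Proof.
move=> [f' df' ff'] [h' dh' hh']; exists (fun y => f' y + h' y).
  exact: differentiableD.
by apply: filterS2 ff' hh' => y -> ->.
Qed.

Lemma germ_differentiableM f h x :
  germ_differentiable f x -> germ_differentiable h x ->
  germ_differentiable (fun y => f y * h y) x.
Proof.
move=> [f' df' ff'] [h' dh' hh']; exists (fun y => f' y * h' y).
  exact: differentiableM.
by apply: filterS2 ff' hh' => y -> ->.
Qed.

Lemma germ_differentiableV f x : f x != 0 ->
  germ_differentiable f x -> germ_differentiable (fun y => (f y)^-1) x.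
Proof.
move=> fx0 [f' df' ff']; exists (fun y => (f' y)^-1); last by apply: filterS ff' => y ->.
by apply: differentiableV; rewrite // -(nbhs_singleton ff').
Qed.

Lemma germ_differentiable_big (I : Type) (r : seq I) (P : pred I) (op : R -> R -> R)
    (idx : R) (F : I -> pt -> R) x :
  (forall f h, germ_differentiable f x -> germ_differentiable h x ->
     germ_differentiable (fun y => op (f y) (h y)) x) ->
  (forall i, P i -> germ_differentiable (F i) x) ->
  germ_differentiable (fun y => \big[op/idx]_(i <- r | P i) F i y) x.
Proof.
move=> Hop HF; elim: r => [|a r IHr].
  apply: (@germ_differentiable_near_eq _ (fun _ => idx)); last exact: germ_differentiable_cst.
  by near=> y; rewrite big_nil.
apply: (@germ_differentiable_near_eq _
  (fun y => if P a then op (F a y) (\big[op/idx]_(i <- r | P i) F i y)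
            else \big[op/idx]_(i <- r | P i) F i y)).
  by near=> y; rewrite big_cons.
by case: (boolP (P a)) => Pa //; apply: Hop => //; exact: HF.
Unshelve. all: by end_near. Qed.

Lemma germ_differentiable_det k (F : 'I_k -> 'I_k -> pt -> R) x :
  (forall i j, germ_differentiable (F i j) x) ->
  germ_differentiable (fun y => \det (\matrix_(i, j) F i j y)) x.
Proof.
move=> HF; apply: (@germ_differentiable_near_eq _
  (fun y => \sum_(s : 'S_k) (-1) ^+ s * \prod_i F i (s i) y)).
  by near=> y; rewrite /determinant; apply: eq_bigr => s _; under eq_bigr do rewrite mxE.
apply: germ_differentiable_big => [f h|s _]; first exact: germ_differentiableD.
apply: germ_differentiableM; first exact: germ_differentiable_cst.
by apply: germ_differentiable_big => [f h|i _]; [exact: germ_differentiableM|].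
Unshelve. all: by end_near. Qed.

Lemma is_derive_germ_comp f (q : R -> pt) t :
  derivable q t 1 -> germ_differentiable f (q t) ->
  is_derive t 1 (fun s => f (q s)) (\sum_(c < n) pd c f (q t) * derive1 q t 0 c).
Proof.
move=> dq [f' df' ff'].
have dq' : differentiable q t by apply/derivable1_diffP.
have Hf' : is_derive t 1 (f' \o q) (\sum_(c < n) pd c f' (q t) * derive1 q t 0 c).
  apply: DeriveDef; first exact/diff_derivable/differentiable_comp.
  rewrite deriveE; last exact: differentiable_comp.
  rewrite diff_comp //= (_ : 'd q t 1 = derive1 q t); last by rewrite derive1E deriveE.
  rewrite {1}[derive1 q t]row_sum_delta linear_sum /=.
  by apply: eq_bigr => c _; rewrite linearZ /= /pd -deriveE // mulrC.
have -> : \sum_(c < n) pd c f (q t) * derive1 q t 0 c =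
          \sum_(c < n) pd c f' (q t) * derive1 q t 0 c.
  by apply: eq_bigr => c _; congr (_ * _); exact: near_eq_derive.
apply: near_eq_is_derive Hf'.
have cq : {for t, continuous q} by exact: differentiable_continuous.
have ffq : \forall s \near t, f (q s) = f' (q s) := cq _ ff'.
by apply: filterS ffq => s /= ->.
Qed.

Lemma is_derive_coord (w : R -> pt) t (a : 'I_n) : derivable w t 1 ->
  is_derive t 1 (fun s => w s 0 a) (derive1 w t 0 a).
Proof.
move=> dw; have /derivable_mxP/(_ 0 a) da := dw.
by rewrite derive1E derive_mx // mxE; exact: derivableP.
Qed.

Lemma smooth_on_germ_differentiable D f x :
  smooth_on D f -> D x -> germ_differentiable f x.
Proof. by move=> sf Dx; exact/differentiable_germ/(sf [::]). Qed.

Lemma smooth_on_germ_differentiable_pd D f c x :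
  smooth_on D f -> D x -> germ_differentiable (pd c f) x.
Proof. by move=> sf Dx; exact/differentiable_germ/(sf [:: c]). Qed.

End GermDifferentiability.

Section MetricRegularity.
Variables (R : realType) (n : nat) (D : set 'rV[R]_n) (g : tens2 R n).
Hypotheses (oD : open D) (gm : is_metric D g).

(* On the open set [D] the inverse is given by Cramer's rule, whose entries
   are rational in the components of [g]. *)
Lemma germ_differentiable_ginv a b x : D x -> germ_differentiable (ginv g a b) x.
Proof.
have [_ [g_unit g_smooth]] := gm.
move=> Dx; have Dnear : \forall y \near x, D y by exact: open_nbhs_nbhs.
have dg i j : germ_differentiable (g i j) x := smooth_on_germ_differentiable (g_smooth i j) Dx.
apply: (@germ_differentiable_near_eq _ _ _ (fun y => (\det (\matrix_(i, j) g i j y))^-1 *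
   ((-1) ^+ (b + a) * \det (\matrix_(i, j) g (lift b i) (lift a j) y)))).
  apply: filterS Dnear => y Dy.
  rewrite /ginv /invmx (g_unit y Dy) !mxE /cofactor; congr (_^-1 * (_ * \det _)).
  by apply/matrixP => i j; rewrite !mxE.
apply: germ_differentiableM; last apply: germ_differentiableM.
- apply: germ_differentiableV; last exact: germ_differentiable_det.
  have := g_unit x Dx; rewrite unitmxE unitfE.
  by congr (_ != _); congr (\det _); apply/matrixP => i j; rewrite !mxE.
- exact: germ_differentiable_cst.
- exact: germ_differentiable_det.
Qed.

Lemma germ_differentiable_Gam a b c x : D x -> germ_differentiable (Gam g a b c) x.
Proof.
have [_ [_ g_smooth]] := gm.
move=> Dx; have dpg i j k := smooth_on_germ_differentiable_pd k (g_smooth i j) Dx.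
apply: germ_differentiableM; first exact: germ_differentiable_cst.
apply: germ_differentiable_big => [f h|d _]; first exact: germ_differentiableD.
apply: germ_differentiableM; first exact: germ_differentiable_ginv.
by apply: germ_differentiableD; [apply: germ_differentiableD|apply: germ_differentiableN].
Qed.

Lemma germ_differentiable_cov1 (L : covfield R n) a b x :
  (forall a, smooth_on D (L a)) -> D x -> germ_differentiable (cov1 g L a b) x.
Proof.
move=> sL Dx; apply: germ_differentiableD.
  exact: smooth_on_germ_differentiable_pd.
apply/germ_differentiableN/germ_differentiable_big => [f h|d _].
  exact: germ_differentiableD.
apply: germ_differentiableM; first exact: germ_differentiable_Gam.
exact: smooth_on_germ_differentiable.
Qed.

Lemma germ_differentiable_symcov1 (L : covfield R n) a b x :
  (forall a, smooth_on D (L a)) -> D x -> germ_differentiable (symcov1 g L a b) x.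
Proof.
move=> sL Dx; apply: germ_differentiableM; first exact: germ_differentiable_cst.
by apply: germ_differentiableD; exact: germ_differentiable_cov1.
Qed.

End MetricRegularity.

Section Contractions.
Variables (R : realType) (n : nat).
Notation pt := 'rV[R]_n.
Implicit Types (g T K : tens2 R n) (u : covfield R n) (x v : pt).

Definition cubic (T : 'I_n -> 'I_n -> 'I_n -> pt -> R) x v : R :=
  \sum_(a < n) \sum_(b < n) \sum_(c < n) T a b c x * v 0 a * v 0 b * v 0 c.

Lemma quad_sym2 T x v : quad (sym2 T) x v = quad T x v.
Proof.
have quadC : \sum_(a < n) \sum_(b < n) T b a x * v 0 a * v 0 b = quad T x v.
  rewrite exchange_big; apply: eq_bigr => a _; apply: eq_bigr => b _; ring.
transitivity (2^-1 * (quad T x v + \sum_(a < n) \sum_(b < n) T b a x * v 0 a * v 0 b)).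
  rewrite /quad -big_split mulr_sumr; apply: eq_bigr => a _.
  rewrite -big_split mulr_sumr; apply: eq_bigr => b _ /=; rewrite /sym2; ring.
by rewrite quadC; field.
Qed.

Lemma cubic_sym3 (T : 'I_n -> 'I_n -> 'I_n -> pt -> R) x v :
  cubic (sym3 T) x v = cubic T x v.
Proof.
pose Phi (F : 'I_n -> 'I_n -> 'I_n -> R) :=
  \sum_(a < n) \sum_(b < n) \sum_(c < n) F a b c * v 0 a * v 0 b * v 0 c.
have E1 : Phi (fun a b c => T a c b x) = cubic T x v.
  apply: eq_bigr => a _; rewrite exchange_big.
  by apply: eq_bigr => b _; apply: eq_bigr => c _; ring.
have E2 : Phi (fun a b c => T b a c x) = cubic T x v.
  rewrite /Phi exchange_big.
  by apply: eq_bigr => a _; apply: eq_bigr => b _; apply: eq_bigr => c _; ring.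
have E3 : Phi (fun a b c => T b c a x) = cubic T x v.
  rewrite /Phi exchange_big; apply: eq_bigr => a _; rewrite exchange_big.
  by apply: eq_bigr => b _; apply: eq_bigr => c _; ring.
have E4 : Phi (fun a b c => T c a b x) = cubic T x v.
  rewrite /Phi; under eq_bigr => a _ do rewrite exchange_big.
  rewrite exchange_big.
  by apply: eq_bigr => a _; apply: eq_bigr => b _; apply: eq_bigr => c _; ring.
have E5 : Phi (fun a b c => T c b a x) = cubic T x v.
  rewrite /Phi; under eq_bigr => a _ do rewrite exchange_big.
  rewrite exchange_big; apply: eq_bigr => a _; rewrite exchange_big.
  by apply: eq_bigr => b _; apply: eq_bigr => c _; ring.
transitivity (6^-1 * (cubic T x v + Phi (fun a b c => T a c b x)
  + Phi (fun a b c => T b a c x) + Phi (fun a b c => T b c a x)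
  + Phi (fun a b c => T c a b x) + Phi (fun a b c => T c b a x))).
  rewrite /cubic /Phi -!big_split mulr_sumr; apply: eq_bigr => a _ /=.
  rewrite -!big_split mulr_sumr; apply: eq_bigr => b _ /=.
  rewrite -!big_split mulr_sumr; apply: eq_bigr => c _ /=.
  rewrite /sym3; ring.
by rewrite E1 E2 E3 E4 E5; field.
Qed.

Lemma cubic_cov2_CKT (D : set pt) g K u x v : is_CKT D g K u -> D x ->
  cubic (cov2 g K) x v = lin u x v * quad g x v.
Proof.
move=> [_ K_conf] Dx.
transitivity (cubic (fun a b c y => u a y * g b c y) x v); last first.
  rewrite /cubic /lin /quad mulr_suml; apply: eq_bigr => a _.
  rewrite mulr_sumr; apply: eq_bigr => b _.
  by rewrite mulr_sumr; apply: eq_bigr => c _; ring.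
rewrite -cubic_sym3 -[RHS]cubic_sym3.
by apply: eq_bigr => a _; apply: eq_bigr => b _; apply: eq_bigr => c _; rewrite K_conf.
Qed.

End Contractions.

Section AlongGeodesics.
Variables (R : realType) (n : nat).
Notation pt := 'rV[R]_n.
Implicit Types (g K : tens2 R n) (L u : covfield R n) (x v w : pt).

Definition geodesic_eq g x v w : Prop :=
  forall a, w 0 a + \sum_(b < n) \sum_(c < n) Gam g a b c x * v 0 b * v 0 c = 0.

Lemma geodesic_eqE g x v w : geodesic_eq g x v w ->
  forall a, w 0 a = - \sum_(b < n) \sum_(c < n) Gam g a b c x * v 0 b * v 0 c.
Proof. by move=> hw a; apply/eqP; rewrite -subr_eq0 opprK hw. Qed.

Lemma lin_chain_geodesic g L x v w : geodesic_eq g x v w ->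
  \sum_(a < n) ((\sum_(b < n) pd b (L a) x * v 0 b) * v 0 a + L a x * w 0 a)
  = quad (symcov1 g L) x v.
Proof.
move=> /geodesic_eqE hw.
rewrite /symcov1 quad_sym2 /quad /cov1.
have -> : \sum_(a < n) \sum_(b < n)
    (pd b (L a) x - \sum_(d < n) Gam g d a b x * L d x) * v 0 a * v 0 b =
  \sum_(a < n) \sum_(b < n) pd b (L a) x * v 0 a * v 0 b +
  \sum_(a < n) \sum_(b < n) \sum_(d < n) - (Gam g d a b x * L d x * v 0 a * v 0 b).
  rewrite -big_split; apply: eq_bigr => a _; rewrite -big_split; apply: eq_bigr => b _ /=.
  rewrite !mulrBl !mulr_suml -sumrN; congr (_ + _); apply: eq_bigr => d _; ring.
rewrite big_split /=; congr (_ + _).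
  by apply: eq_bigr => a _; rewrite mulr_suml; apply: eq_bigr => b _; ring.
under eq_bigr => a _ do rewrite hw mulrN mulr_sumr -sumrN.
under eq_bigr => a _ do under eq_bigr => i _ do rewrite mulr_sumr -sumrN.
rewrite exchange_big; apply: eq_bigr => a _; rewrite exchange_big.
by apply: eq_bigr => b _; apply: eq_bigr => d _; ring.
Qed.

Lemma quad_chain_geodesic g K x v w : geodesic_eq g x v w ->
  \sum_(a < n) \sum_(b < n)
     (((\sum_(c < n) pd c (K a b) x * v 0 c) * v 0 a + K a b x * w 0 a) * v 0 b
      + K a b x * v 0 a * w 0 b)
  = cubic (cov2 g K) x v.
Proof.
move=> /geodesic_eqE hw.
have -> : \sum_(a < n) \sum_(b < n)
     (((\sum_(c < n) pd c (K a b) x * v 0 c) * v 0 a + K a b x * w 0 a) * v 0 b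
      + K a b x * v 0 a * w 0 b) =
   \sum_(a < n) \sum_(b < n) \sum_(c < n) pd c (K a b) x * v 0 a * v 0 b * v 0 c
 + \sum_(a < n) \sum_(b < n) K a b x * w 0 a * v 0 b
 + \sum_(a < n) \sum_(b < n) K a b x * v 0 a * w 0 b.
  rewrite -!big_split; apply: eq_bigr => a _; rewrite -!big_split; apply: eq_bigr => b _ /=.
  rewrite !mulrDl !mulr_suml; congr (_ + _ + _); apply: eq_bigr => c _; ring.
have -> : cubic (cov2 g K) x v =
   \sum_(a < n) \sum_(b < n) \sum_(c < n) pd c (K a b) x * v 0 a * v 0 b * v 0 c
 + \sum_(a < n) \sum_(b < n) \sum_(c < n) \sum_(d < n)
      - (Gam g d a c x * K d b x * v 0 a * v 0 b * v 0 c)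
 + \sum_(a < n) \sum_(b < n) \sum_(c < n) \sum_(d < n)
      - (Gam g d b c x * K a d x * v 0 a * v 0 b * v 0 c).
  rewrite -!big_split; apply: eq_bigr => a _; rewrite -!big_split; apply: eq_bigr => b _ /=.
  rewrite -!big_split; apply: eq_bigr => c _ /=.
  rewrite /cov2 -addrA -big_split /= !mulrBl !mulr_suml -sumrN; congr (_ + _).
  by apply: eq_bigr => d _; ring.
congr (_ + _ + _).
- under eq_bigr => a _ do under eq_bigr => b _ do
    rewrite hw mulrN mulNr mulr_sumr mulr_suml -sumrN.
  under eq_bigr => a _ do under eq_bigr => b _ do under eq_bigr => i _ do
    rewrite mulr_sumr mulr_suml -sumrN.
  rewrite exchange_big; under eq_bigr => b _ do rewrite exchange_big.
  rewrite exchange_big; apply: eq_bigr => a _; apply: eq_bigr => b _; rewrite exchange_big.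
  by apply: eq_bigr => c _; apply: eq_bigr => d _; ring.
- under eq_bigr => a _ do under eq_bigr => b _ do rewrite hw mulrN mulr_sumr -sumrN.
  under eq_bigr => a _ do under eq_bigr => b _ do under eq_bigr => i _ do
    rewrite mulr_sumr -sumrN.
  apply: eq_bigr => a _; rewrite exchange_big; apply: eq_bigr => b _; rewrite exchange_big.
  by apply: eq_bigr => c _; apply: eq_bigr => d _; ring.
Qed.

Definition geodesic_at g (E0 : R) (q : R -> pt) (t : R) : Prop :=
  [/\ derivable q t 1, derivable (derive1 q) t 1,
      geodesic_eq g (q t) (derive1 q t) (derive1 (derive1 q) t)
    & quad g (q t) (derive1 q t) = 2 * E0].

Lemma first_integralP (D : set pt) g E0 (I : R -> pt -> pt -> R) :
  (forall q t, D (q t) -> geodesic_at g E0 q t ->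
     is_derive t 1 (fun s => I s (q s) (derive1 q s)) 0) ->
  first_integral D g E0 I.
Proof.
move=> HI T q _ qgeo t Tt; have [Dq dq dv hw energy] := qgeo t Tt.
exact: HI Dq (And4 dq dv hw energy).
Qed.

Section OneGeodesic.
Variables (g : tens2 R n) (E0 : R) (q : R -> pt) (t : R).
Hypothesis qgeo : geodesic_at g E0 q t.

Lemma is_derive_lin_geodesic L : (forall a, germ_differentiable (L a) (q t)) ->
  is_derive t 1 (fun s => lin L (q s) (derive1 q s))
    (quad (symcov1 g L) (q t) (derive1 q t)).
Proof.
have [dq dv hw _] := qgeo; move=> dL.
rewrite -(lin_chain_geodesic L hw); apply: is_derive_big => a _ _.
by apply: is_derive_mul; [exact: is_derive_germ_comp | exact: is_derive_coord].
Qed.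

Lemma is_derive_quad_CKT_geodesic (D : set pt) K u : D (q t) ->
  (forall a b, germ_differentiable (K a b) (q t)) -> is_CKT D g K u ->
  is_derive t 1 (fun s => quad K (q s) (derive1 q s))
    (2 * E0 * lin u (q t) (derive1 q t)).
Proof.
have [dq dv hw energy] := qgeo; move=> Dq dK K_CKT.
rewrite mulrC -energy -(cubic_cov2_CKT _ K_CKT Dq) -(quad_chain_geodesic K hw).
apply: is_derive_big => a _ _; apply: is_derive_big => b _ _.
apply: is_derive_mul; last exact: is_derive_coord.
apply: is_derive_mul; last exact: is_derive_coord.
exact: is_derive_germ_comp.
Qed.

End OneGeodesic.
End AlongGeodesics.

Lemma telescope_sum_shift (V : zmodType) (e c : nat -> V) (m l : nat) :
  (m <= l)%N -> (forall k, (m <= k < l)%N -> c k = e k.+1) -> c l = 0 ->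
  \sum_(m <= k < l.+1) (e k - c k) = e m.
Proof.
move=> ml ce cl; rewrite big_nat_recr //= cl subr0.
have -> : \sum_(m <= k < l) (e k - c k) = \sum_(m <= k < l) - (e k.+1 - e k).
  by apply: eq_big_nat => k /ce ->; rewrite opprB.
by rewrite sumrN telescope_sumr // opprB subrK.
Qed.

Section QuadLinear.
Variables (R : realType) (n : nat).
Implicit Types (T C : tens2 R n) (x v : 'rV[R]_n).

Lemma quadD T C x v :
  quad (fun a b y => T a b y + C a b y) x v = quad T x v + quad C x v.
Proof.
rewrite /quad -big_split; apply: eq_bigr => a _.
by rewrite -big_split; apply: eq_bigr => b _ /=; ring.
Qed.

Lemma quadN T x v : quad (fun a b y => - T a b y) x v = - quad T x v.
Proof.
rewrite /quad -sumrN; apply: eq_bigr => a _.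
by rewrite -sumrN; apply: eq_bigr => b _; ring.
Qed.

Lemma quad_sum (I : Type) (r : seq I) (P : pred I) (c : I -> R) (T : I -> tens2 R n) x v :
  quad (fun a b y => \sum_(i <- r | P i) c i * T i a b y) x v
  = \sum_(i <- r | P i) c i * quad (T i) x v.
Proof.
rewrite /quad; under [RHS]eq_bigr => i _ do rewrite mulr_sumr.
rewrite [RHS]exchange_big /=; apply: eq_bigr => a _.
under [RHS]eq_bigr => i _ do rewrite mulr_sumr.
rewrite [RHS]exchange_big /=; apply: eq_bigr => b _.
by rewrite !mulr_suml; apply: eq_bigr => i _; ring.
Qed.

Lemma quad_subr_sum (I : Type) (r : seq I) (P : pred I) (c : I -> R)
    (T : I -> tens2 R n) C x v :
  quad (fun a b y => - (\sum_(i <- r | P i) c i * T i a b y) + C a b y) x v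
  = - (\sum_(i <- r | P i) c i * quad (T i) x v) + quad C x v.
Proof.
rewrite (quadD (fun a b y => - (\sum_(i <- r | P i) c i * T i a b y))).
by rewrite (quadN (fun a b y => \sum_(i <- r | P i) c i * T i a b y)) quad_sum.
Qed.

Lemma lin_mul_eq (k c : R) (L L' : covfield R n) x v :
  (forall a, k * L a x = c * L' a x) -> k * lin L x v = c * lin L' x v.
Proof.
move=> LL'; rewrite /lin !mulr_sumr; apply: eq_bigr => a _.
by rewrite !mulrA LL'.
Qed.

Lemma lin_mul_eq0 (k : R) (L : covfield R n) x v :
  (forall a, k * L a x = 0) -> k * lin L x v = 0.
Proof. by move=> L0; rewrite /lin mulr_sumr big1 // => a _; rewrite mulrA L0 mul0r. Qed.

End QuadLinear.

Section FirstIntegrals.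
Variables (R : realType) (n : nat) (D : set 'rV[R]_n) (g : tens2 R n) (E0 : R).
Hypotheses (oD : open D) (gm : is_metric D g).

Lemma first_integral_Iexp (lam : R) (L Y : covfield R n) :
  lam != 0 -> (forall a, smooth_on D (L a)) -> is_CKT D g (symcov1 g L) Y ->
  (forall a x, D x -> L a x = 2 * E0 / lam ^+ 2 * Y a x) ->
  first_integral D g E0 (Iexp g lam L).
Proof.
move=> lam0 sL L_CKT LY; apply: first_integralP => q t Dq qgeo.
have dL a := smooth_on_germ_differentiable (sL a) Dq.
have dK a b := germ_differentiable_symcov1 oD gm a b sL Dq.
have HQ := is_derive_quad_CKT_geodesic qgeo Dq dK L_CKT.
have HA := is_derive_lin_geodesic qgeo dL.
have linLY : lin L (q t) (derive1 q t) = 2 * E0 / lam ^+ 2 * lin Y (q t) (derive1 q t).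
  by rewrite /lin mulr_sumr; apply: eq_bigr => a _; rewrite LY //; ring.
rewrite /Iexp; apply: is_derive_eq (is_derive_mul (is_derive_expR_scale lam t)
           (is_derive_add (is_derive_opp HQ) (is_derive_mull lam HA))) _.
by rewrite linLY; field.
Qed.

Lemma first_integral_I2 (ell : nat) (L Y : nat -> covfield R n) :
  (forall k a, (k <= ell)%N -> smooth_on D (L (2 * k)%N a)) ->
  (forall k, (k <= ell)%N -> is_CKT D g (symcov1 g (L (2 * k)%N)) (Y (2 * k)%N)) ->
  (forall a x, D x -> E0 * Y (2 * ell)%N a x = 0) ->
  (forall k, (k < ell)%N -> forall a x, D x ->
     E0 * Y (2 * k)%N a x = ((k + 1) * (2 * k + 1))%:R * L (2 * k + 2)%N a x) ->
  first_integral D g E0 (I2 g ell L).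
Proof.
move=> sL L_CKT Y_last Y_rec; apply: first_integralP => q t Dq qgeo.
pose A k := lin (L (2 * k)%N) (q t) (derive1 q t).
pose e k := (2 * k)%:R * t ^+ (2 * k).-1 * A k.
pose c k := 2 * t ^+ (2 * k + 1) / (2 * k + 1)%:R * (E0 * lin (Y (2 * k)%N) (q t) (derive1 q t)).
have Hterm k : (0 <= k < ell.+1)%N -> is_derive t 1
    (fun s => - (s ^+ (2 * k + 1) / (2 * k + 1)%:R) *
                quad (symcov1 g (L (2 * k)%N)) (q s) (derive1 q s)
              + s ^+ (2 * k) * lin (L (2 * k)%N) (q s) (derive1 q s))
    (e k - c k).
  rewrite ltnS => kl; have dL a := smooth_on_germ_differentiable (sL k a kl) Dq.
  have dK a b := germ_differentiable_symcov1 oD gm a b (sL k ^~ kl) Dq.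
  apply: is_derive_eq (is_derive_add
    (is_derive_mul (is_derive_opp (is_derive_mulr _ (is_derive_exprn _ t)))
                   (is_derive_quad_CKT_geodesic qgeo Dq dK (L_CKT k kl)))
    (is_derive_mul (is_derive_exprn _ t) (is_derive_lin_geodesic qgeo dL))) _.
  rewrite /e /c /A addn1 /=; field.
  by apply: lt0r_neq0; have := ler0n R k; lra.
apply: is_derive_eq (is_derive_sum_nat Hterm) _.
rewrite telescope_sum_shift // => [|k /andP[_ kl]|]; first by rewrite /e !mul0r.
  2: by rewrite /c (lin_mul_eq0 _ (fun a => Y_last a _ Dq)) mulr0.
rewrite /c /e /A (lin_mul_eq _ (fun a => Y_rec k kl a _ Dq)).
rewrite mulnSr (_ : (2 * k + 2).-1 = 2 * k + 1)%N; last by rewrite addn2 addn1.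
rewrite !(natrD, natrM); field.
by apply: lt0r_neq0; have := ler0n R k; lra.
Qed.

Lemma is_derive_I1_time_part (ell : nat) (L Y : nat -> covfield R n) q t :
  (forall k a, (1 <= k <= ell)%N -> smooth_on D (L (2 * k - 1)%N a)) ->
  (forall k, (1 <= k <= ell)%N ->
     is_CKT D g (symcov1 g (L (2 * k - 1)%N)) (Y (2 * k - 1)%N)) ->
  ((0 < ell)%N -> forall a x, D x -> E0 * Y (2 * ell - 1)%N a x = 0) ->
  (forall k, (1 <= k < ell)%N -> forall a x, D x ->
     E0 * Y (2 * k - 1)%N a x = (k * (2 * k + 1))%:R * L (2 * k + 1)%N a x) ->
  D (q t) -> geodesic_at g E0 q t ->
  is_derive t 1
    (fun s => - (\sum_(1 <= k < ell.+1) s ^+ (2 * k) / (2 * k)%:R *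
                   quad (symcov1 g (L (2 * k - 1)%N)) (q s) (derive1 q s))
              + \sum_(1 <= k < ell.+1) s ^+ (2 * k - 1) *
                   lin (L (2 * k - 1)%N) (q s) (derive1 q s))
    (if (0 < ell)%N then lin (L 1%N) (q t) (derive1 q t) else 0).
Proof.
move=> sL L_CKT Y_last Y_rec Dq qgeo.
pose Q k := quad (symcov1 g (L (2 * k - 1)%N)) (q t) (derive1 q t).
pose A k := lin (L (2 * k - 1)%N) (q t) (derive1 q t).
pose e k := (2 * k - 1)%:R * t ^+ (2 * k - 1).-1 * A k.
pose c k := t ^+ (2 * k) / (2 * k)%:R *
            (2 * (E0 * lin (Y (2 * k - 1)%N) (q t) (derive1 q t))).
have Hquad k : (1 <= k < ell.+1)%N -> is_derive t 1
    (fun s => s ^+ (2 * k) / (2 * k)%:R *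
              quad (symcov1 g (L (2 * k - 1)%N)) (q s) (derive1 q s))
    (t ^+ (2 * k - 1) * Q k + c k).
  rewrite ltnS => kl; have [k1 _] := andP kl.
  have dK a b := germ_differentiable_symcov1 oD gm a b (sL k ^~ kl) Dq.
  apply: is_derive_eq (is_derive_mul (is_derive_mulr _ (is_derive_exprn _ t))
                         (is_derive_quad_CKT_geodesic qgeo Dq dK (L_CKT k kl))) _.
  rewrite /Q /c subn1 /=; field.
  by rewrite pnatr_eq0 -lt0n.
have Hlin k : (1 <= k < ell.+1)%N -> is_derive t 1
    (fun s => s ^+ (2 * k - 1) * lin (L (2 * k - 1)%N) (q s) (derive1 q s))
    (e k + t ^+ (2 * k - 1) * Q k).
  rewrite ltnS => kl; have dL a := smooth_on_germ_differentiable (sL k a kl) Dq.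
  exact: is_derive_mul (is_derive_exprn _ t) (is_derive_lin_geodesic qgeo dL).
apply: is_derive_eq (is_derive_add (is_derive_opp (is_derive_sum_nat Hquad))
                                   (is_derive_sum_nat Hlin)) _.
rewrite addrC -sumrB (eq_bigr (fun k => e k - c k)) => [|k _]; last exact: addrKA.
case: ell {sL L_CKT Hquad Hlin} Y_last Y_rec => [|m] Y_last Y_rec; first by rewrite big_geq.
rewrite telescope_sum_shift // => [|k km|]; first by rewrite /e mul1r expr0 mul1r.
  rewrite /c /e /A (lin_mul_eq _ (fun a => Y_rec k km a _ Dq)).
  have -> : (2 * k.+1 - 1 = 2 * k + 1)%N by rewrite mulnSr addn2 subn1 addn1.
  rewrite addn1 /= !natrM; field; have [k1 _] := andP km.
  by rewrite pnatr_eq0 -lt0n.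
by rewrite /c (lin_mul_eq0 _ (fun a => Y_last isT a _ Dq)) !mulr0.
Qed.

Lemma first_integral_I1 (ell : nat) (C0 : tens2 R n) (X0 : covfield R n)
    (L Y : nat -> covfield R n) (G : sfield R n) :
  (forall a b, smooth_on D (C0 a b)) ->
  (forall k a, (1 <= k <= ell)%N -> smooth_on D (L (2 * k - 1)%N a)) ->
  smooth_on D G ->
  is_CKT D g C0 X0 ->
  (forall k, (1 <= k <= ell)%N ->
     is_CKT D g (symcov1 g (L (2 * k - 1)%N)) (Y (2 * k - 1)%N)) ->
  ((0 < ell)%N -> forall a x, D x -> E0 * Y (2 * ell - 1)%N a x = 0) ->
  (forall k, (1 <= k < ell)%N -> forall a x, D x ->
     E0 * Y (2 * k - 1)%N a x = (k * (2 * k + 1))%:R * L (2 * k + 1)%N a x) ->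
  (forall a x, D x ->
     pd a G x = - (2 * E0 * X0 a x) - (if (0 < ell)%N then L 1%N a x else 0)) ->
  first_integral D g E0 (I1 g ell C0 L G).
Proof.
move=> sC sL sG C_CKT L_CKT Y_last Y_rec dG; apply: first_integralP => q t Dq qgeo.
have [dq _ _ _] := qgeo.
have dC a b := smooth_on_germ_differentiable (sC a b) Dq.
have HI := is_derive_add (is_derive_add
  (is_derive_I1_time_part sL L_CKT Y_last Y_rec Dq qgeo)
  (is_derive_quad_CKT_geodesic qgeo Dq dC C_CKT))
  (is_derive_germ_comp dq (smooth_on_germ_differentiable sG Dq)).
rewrite /I1; under eq_fun => s do rewrite quad_subr_sum (addrAC _ (quad C0 _ _)).
apply: is_derive_eq HI _.
rewrite /lin mulr_sumr -addrA -big_split /=.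
case: ifP => ell0; rewrite ?add0r -?big_split big1 // => a _ /=; rewrite dG // ell0; ring.
Qed.

End FirstIntegrals.

Theorem theorem2 (R : realType) (n : nat) (D : set 'rV[R]_n)
    (g : tens2 R n) (E0 : R) :
  open D -> is_metric D g ->
  [/\
  (* Integral 1 *)
  (forall (ell : nat) (C0 : tens2 R n) (X0 : covfield R n)
          (L Y : nat -> covfield R n) (G : sfield R n),
     (forall a b, smooth_on D (C0 a b)) ->
     (forall k a, (1 <= k <= ell)%N -> smooth_on D (L (2 * k - 1)%N a)) ->
     smooth_on D G ->
     is_CKT D g C0 X0 ->
     (forall k, (1 <= k <= ell)%N ->
        is_CKT D g (symcov1 g (L (2 * k - 1)%N)) (Y (2 * k - 1)%N)) ->
     ((0 < ell)%N -> forall a x, D x -> E0 * Y (2 * ell - 1)%N a x = 0) ->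
     (forall k, (1 <= k < ell)%N -> forall a x, D x ->
        E0 * Y (2 * k - 1)%N a x = (k * (2 * k + 1))%:R * L (2 * k + 1)%N a x) ->
     (forall a x, D x ->
        pd a G x = - (2 * E0 * X0 a x) - (if (0 < ell)%N then L 1%N a x else 0)) ->
     first_integral D g E0 (I1 g ell C0 L G)),
  (* Integral 2 *)
  (forall (ell : nat) (L Y : nat -> covfield R n),
     (forall k a, (k <= ell)%N -> smooth_on D (L (2 * k)%N a)) ->
     (forall k, (k <= ell)%N ->
        is_CKT D g (symcov1 g (L (2 * k)%N)) (Y (2 * k)%N)) ->
     (forall a x, D x -> E0 * Y (2 * ell)%N a x = 0) ->
     (forall k, (k < ell)%N -> forall a x, D x ->
        E0 * Y (2 * k)%N a x = ((k + 1) * (2 * k + 1))%:R * L (2 * k + 2)%N a x) ->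
     first_integral D g E0 (I2 g ell L))
  &
  (* Integral 3 *)
  (forall (lam : R) (L Y : covfield R n),
     lam != 0 ->
     (forall a, smooth_on D (L a)) ->
     is_CKT D g (symcov1 g L) Y ->
     (forall a x, D x -> L a x = 2 * E0 / lam ^+ 2 * Y a x) ->
     first_integral D g E0 (Iexp g lam L))].
Proof.
move=> oD gm; split.
- exact: first_integral_I1.
- exact: first_integral_I2.
- exact: first_integral_Iexp.
Qed.
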